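(* Let $\mathcal{X}\subset\mathbb{R}^d$ be bounded and let $\mathcal{M}_f$ be a set of finite measures on $\mathcal{X}$, all of which admit densities with respect to Lebesgue measure ($\Lambda$ having density $\lambda$). Then the scoring function $S:\mathcal{M}_f\times\mathbb{M}_0\to\mathbb{R}$ defined by $$S(\Lambda,\{y_1,\dots,y_n\})=-\sum_{i=1}^n\log\lambda(y_i)+\int_{\mathcal{X}}\lambda(y)\,dy$$ for $n\in\mathbb{N}$ and $S(\Lambda,\emptyset)=\int_{\mathcal{X}}\lambda(y)\,dy$ is a strictly consistent scoring function for the intensity (measure) of finite point processes on $\mathcal{X}$ with intensity measure in $\mathcal{M}_f$.
   Context: $\mathbb{M}_0$ is the space of finite counting measures on $\mathcal{X}$, realizations written as point sets. The intensity measure of $\Phi$ is $B\mapsto\mathbb{E}\Phi(B)$. Strict consistency: for every point process $\Phi$ in the class (expected scores assumed to exist) with intensity measure $\Lambda$, $\mathbb{E}S(Q,\Phi)\ge\mathbb{E}S(\Lambda,\Phi)$ for all $Q\in\mathcal{M}_f$, with equality only if $Q=\Lambda$. *)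

From HB Require Import structures.
From mathcomp Require Import all_boot all_order all_algebra.
From mathcomp Require Import all_classical all_reals all_analysis.
Set Implicit Arguments.
Unset Strict Implicit.
Unset Printing Implicit Defensive.
Import Order.TTheory GRing.Theory Num.Theory.
Local Open Scope classical_set_scope.
Local Open Scope ring_scope.

(* Points of R^d are d-tuples of reals, with the product (= Borel)
   sigma-algebra provided by MathComp-Analysis on [n.-tuple T]. *)

Section Defs.
Variables (R : realType) (d : nat).
Local Notation pt := (d.-tuple R).

Definition box (a b : 'I_d -> R) : set pt :=
  [set x | forall i, a i <= tnth x i <= b i].

(* [leb] is Lebesgue measure on (the Borel sets of) R^d: it gives every
   box its volume.  (This determines it uniquely on the Borel sets.) *)
Definition is_lebesgue (leb : {measure set pt -> \bar R}) : Prop :=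
  forall a b : 'I_d -> R, (forall i, a i <= b i) ->
    leb (box a b) = (\prod_(i < d) (b i - a i))%:E.

Definition bounded_region (X : set pt) : Prop :=
  exists M : R, forall x, X x -> forall i, `|tnth x i| <= M.

Definition count_in (B : set pt) (s : seq pt) : nat :=
  count (fun y => `[< B y >]) s.

Definition is_density (leb : {measure set pt -> \bar R}) (X : set pt)
    (f : pt -> R) : Prop :=
  [/\ measurable_fun X f, (forall x, X x -> 0 <= f x) &
      leb.-integrable X (EFin \o f)].

Definition density_measure (leb : {measure set pt -> \bar R}) (X : set pt)
    (f : pt -> R) (B : set pt) : \bar R :=
  (\int[leb]_(y in B `&` X) (f y)%:E)%E.

(* A finite point process on X, defined on the probability space
   (Omega, P): a random finite counting measure, represented by the list of
   its points (with multiplicity), all lying in X, and measurable for the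
   usual sigma-algebra on M_0 (generated by the counts Phi(B)). *)
Definition is_point_process dO (Omega : measurableType dO) (X : set pt)
    (Phi : Omega -> seq pt) : Prop :=
  (forall w y, y \in Phi w -> X y) /\
  (forall B : set pt, measurable B ->
     measurable_fun setT (fun w => ((count_in B (Phi w))%:R : R))).

Definition intensity dO (Omega : measurableType dO) (P : probability Omega R)
    (Phi : Omega -> seq pt) (B : set pt) : \bar R :=
  (\int[P]_w ((count_in B (Phi w))%:R : R)%:E)%E.

Definition neglog (r : R) : \bar R :=
  if 0 < r then (- ln r)%:E else +oo%E.

Definition log_score (leb : {measure set pt -> \bar R}) (X : set pt)
    (lam : pt -> R) (s : seq pt) : \bar R :=
  ((\sum_(y <- s) neglog (lam y)) + \int[leb]_(x in X) (lam x)%:E)%E.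

End Defs.

From HB Require Import structures.
From mathcomp Require Import all_boot all_order all_algebra.
From mathcomp Require Import all_classical all_reals all_analysis.
From mathcomp Require Import measurable_realfun ring lra.
Import Order.TTheory GRing.Theory Num.Theory.
Local Open Scope classical_set_scope.
Local Open Scope ring_scope.

(* Write t = q / lam.  Where lam > 0,
     -log q + t = -log lam + (t - 1 - log t) + 1,
   and almost surely every point of Phi lies where lam > 0: the expected number
   of points in {lam = 0} is the lam-mass of that set, i.e. 0.  Summing the
   identity over the points of Phi and taking expectations with Campbell's
   formula E sum_(y in Phi) f y = int_X f lam (the intensity hypothesis for
   simple f, then monotone convergence) gives
     E S(q, Phi) - E S(lam, Phi)
       = int_X lam (t - 1 - log t) + (int_X q - int_X t lam),
   a sum of two nonnegative terms since t - 1 - log t >= 0 and t lam <= q.  If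
   it vanishes, the first term forces q = lam a.e. on {lam > 0} and the second
   q = 0 a.e. on {lam = 0}.  Since -log q y = +oo when q y = 0, the identity is
   integrated with every possibly infinite term on the nonnegative side. *)

Section kl_gap_theory.
Context {R : realType}.
Implicit Types l r t : R.

Lemma ln_le_subr1 t : 0 < t -> ln t <= t - 1.
Proof. by move=> t0; have := expR_ge1Dx (ln t); rewrite lnK// => ?; lra. Qed.

Lemma ln_lt_subr1 t : 0 < t -> t != 1 -> ln t < t - 1.
Proof.
move=> t0 t1; have := @expR_gt1Dx R (ln t).
by rewrite lnK// ln_eq0// t1 => /(_ isT) ?; lra.
Qed.

Lemma ler_divfK l r : 0 <= r -> r / l * l <= r.
Proof.
by have [->|l0] := eqVneq l 0; [rewrite mulr0 | rewrite divfK].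
Qed.

Lemma measurable_inv : measurable_fun setT (@GRing.inv R).
Proof.
have mC : measurable (~` [set 0] : set R) by apply: measurableC.
rewrite -(setvU [set 0]); apply/(measurable_funU _ mC (measurable_set1 _)).
split; last exact: measurable_fun_set1.
apply: open_continuous_measurable_fun.
  exact/closed_openC/accessible_closed_set1/hausdorff_accessible/Rhausdorff.
by move=> x /set_mem x0; apply: inv_continuous; exact/eqP.
Qed.

Local Open Scope ereal_scope.

Lemma measurable_neglog : measurable_fun setT (@neglog R).
Proof.
apply: measurable_fun_ifT.
- rewrite (_ : (> 0%R) = (fun x : R => cst 0%R x < id x)%R) //.
  exact: measurable_fun_ltr.
- by apply/measurable_EFinP; apply: measurable_funN; exact: measurable_ln.
- exact: measurable_cst.
Qed.

(* [lam x * kl_gap (q x / lam x)] is the integrand of the (generalized)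
   Kullback-Leibler divergence of [q] from [lam]. *)
Definition kl_gap t : \bar R := neglog t + (t - 1)%:E.

Lemma measurable_kl_gap : measurable_fun setT kl_gap.
Proof.
apply: emeasurable_funD; first exact: measurable_neglog.
by apply/measurable_EFinP; exact: measurable_funB.
Qed.

Lemma kl_gap_ge0 t : 0 <= kl_gap t.
Proof.
rewrite /kl_gap /neglog; case: ifPn => [t0|_]; last by rewrite leey.
by rewrite -EFinD lee_fin; have := ln_le_subr1 _ t0; lra.
Qed.

Lemma kl_gap_eq0 t : kl_gap t = 0 -> t = 1%R.
Proof.
rewrite /kl_gap /neglog; case: ifPn => [t0|//]; rewrite -EFinD => -[].
by have [//|t1] := eqVneq t 1%R; have := ln_lt_subr1 _ t0 t1; lra.
Qed.

Lemma neglogD_div l r : (0 < l)%R ->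
  neglog r + (r / l)%:E = neglog l + kl_gap (r / l) + 1.
Proof.
move=> l0; rewrite /kl_gap /neglog l0 pmulr_lgt0 ?invr_gt0//.
case: ifPn => // r0; rewrite ln_div ?posrE// -!EFinD.
by congr (_%:E); ring.
Qed.

Lemma eq_of_kl_gap_mul_eq0 l r :
  kl_gap (r / l) * l%:E = 0 -> (r / l * l = r)%R -> r = l.
Proof.
have [-> _|l0] := eqVneq l 0%R; first by rewrite mulr0.
move=> /eqP; rewrite mule_eq0 eqe (negbTE l0) orbF => /eqP /kl_gap_eq0 ->.
by rewrite mul1r.
Qed.

End kl_gap_theory.

Section integral_ae.
Context {d : measure_display} {T : measurableType d} {R : realType}.
Context (mu : {measure set T -> \bar R}) {D : set T} (mD : measurable D).
Local Open Scope ereal_scope.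

Lemma ge0_integral_eq0_ae (f : T -> \bar R) : measurable_fun D f ->
  (forall x, D x -> 0 <= f x) -> \int[mu]_(x in D) f x = 0 ->
  ae_eq mu D f (cst 0).
Proof.
move=> mf f0 If0; apply/(ae_eq_integral_abs mu mD mf); rewrite -If0.
by apply: eq_integral => x /set_mem Dx; rewrite gee0_abs ?f0.
Qed.

Lemma integral_ae_diff {f g h : T -> \bar R} :
  mu.-integrable D f -> mu.-integrable D g -> measurable_fun D h ->
  {ae mu, forall x, D x -> g x = f x + h x} ->
  \int[mu]_(x in D) h x = \int[mu]_(x in D) g x - \int[mu]_(x in D) f x.
Proof.
move=> intf intg mh gfh; rewrite -(integralB mD intg intf).
apply: ae_eq_integral => //.
  exact: emeasurable_funB (measurable_int _ intg) (measurable_int _ intf).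
apply: filterS2 gfh (integrable_ae mD intf) => x gfhx ffin Dx.
by rewrite /= gfhx// [f x + _]addeC addeK ?ffin.
Qed.

End integral_ae.

Lemma integral_cst_probability {d : measure_display} {T : measurableType d}
    {R : realType} (P : probability T R) (r : \bar R) :
  (\int[P]_x r = r)%E.
Proof.
rewrite integral_cst; last exact: measurableT.
set PT := (Y in (r * Y)%E).
have -> : PT = 1%E by exact: probability_setT.
exact: mule1.
Qed.

Lemma gap_identity_le {R : realType} {a b c g h i : \bar R} :
  a \is a fin_num -> c \is a fin_num -> g \is a fin_num -> h \is a fin_num ->
  (0 <= i)%E -> (0 <= b)%E -> (b <= c)%E ->
  (i + a + c = h + b + a - g)%E -> (g <= h)%E /\ (h = g -> i = 0 /\ b = c).
Proof.
move=> afin cfin gfin hfin i0 b0 bc.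
have bfin : b \is a fin_num.
  rewrite ge0_fin_numE//; apply: (le_lt_trans bc).
  by rewrite -(fineK cfin) ltry.
move: bc; rewrite -(fineK afin) -(fineK bfin) -(fineK cfin).
rewrite -(fineK gfin) -(fineK hfin).
case: i i0 => [i| |] //; rewrite !lee_fin -EFinN -!EFinD => i0 bc [] e.
by split; [lra | move=> [] hg; split; congr (_%:E); lra].
Qed.

Lemma density_measure_ae_eq {R : realType} {d : nat}
    {leb : {measure set (d.-tuple R) -> \bar R}} {X : set (d.-tuple R)}
    {f g : d.-tuple R -> R} : measurable X ->
  measurable_fun X f -> measurable_fun X g ->
  ae_eq leb X (EFin \o f) (EFin \o g) ->
  forall B, measurable B ->
    density_measure leb X f B = density_measure leb X g B.
Proof.
move=> mX mf mg fg B mB; have mBX := measurableI _ _ mB mX.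
apply: ae_eq_integral => //.
- by apply/measurable_EFinP; exact: measurable_funS mX (@subIsetr _ B X) mf.
- by apply/measurable_EFinP; exact: measurable_funS mX (@subIsetr _ B X) mg.
- by apply: filterS fg => x fgx [_ /fgx].
Qed.

Section point_process.
Context {R : realType} {d : nat}.
Local Notation pt := (d.-tuple R).
Context {leb : {measure set pt -> \bar R}} {X : set pt}.
Hypothesis mX : measurable X.
Context {dO : measure_display} {Omega : measurableType dO}.
Context {P : probability Omega R} {Phi : Omega -> seq pt}.
Hypothesis hPhi : is_point_process X Phi.
Context {lam : pt -> R}.
Hypothesis hlam : is_density leb X lam.
Hypothesis hint : forall B, measurable B ->
  intensity P Phi B = density_measure leb X lam B.

Local Open Scope ereal_scope.
Import HBNNSimple.

Lemma count_inE (A : set pt) (s : seq pt) :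
  ((count_in A s)%:R : R)%:E = \sum_(y <- s) (\1_A y)%:E.
Proof.
elim: s => [|y s IH]; first by rewrite big_nil.
by rewrite big_cons /count_in /= -/(count_in A s) natrD EFinD IH.
Qed.

Lemma measurable_count_in (A : set pt) : measurable A ->
  measurable_fun setT (fun w => ((count_in A (Phi w))%:R : R)%:E).
Proof. by move=> mA; apply/measurable_EFinP; exact: hPhi.2. Qed.

Lemma expected_count_in (A : set pt) : measurable A ->
  \int[P]_w ((count_in A (Phi w))%:R : R)%:E =
  \int[leb]_(x in X) ((\1_A x)%:E * (lam x)%:E).
Proof.
move=> mA; rewrite [LHS]hint// /density_measure integral_mkcondl.
apply: eq_integral => x _; rewrite patchE indicE.
by case: (x \in A); rewrite ?mul1e ?mul0e.
Qed.

Local Notation range_seq h := (finmap.enum_fset (fset_set (range h))).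

Lemma nnsfunE_indic (h : {nnsfun pt >-> R}) (y : pt) :
  (h y)%:E = \sum_(r <- range_seq h) (`|r|%:E * (\1_(h @^-1` [set r]) y)%:E).
Proof.
rewrite [h y]fimfunE fsbig_finite ?fimfunP//= -sumEFin.
apply: eq_big_seq => r; rewrite in_fset_set ?fimfunP// inE => -[x _ <-].
by rewrite EFinM ger0_norm// fun_ge0.
Qed.

Lemma sum_nnsfunE (h : {nnsfun pt >-> R}) (s : seq pt) :
  \sum_(y <- s) (h y)%:E =
  \sum_(r <- range_seq h) (`|r|%:E * ((count_in (h @^-1` [set r]) s)%:R : R)%:E).
Proof.
under eq_bigr do rewrite nnsfunE_indic.
rewrite exchange_big /=; apply: eq_bigr => r _.
by rewrite count_inE ge0_sume_distrr// => y _; rewrite lee_fin.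
Qed.

Lemma measurable_sum_nnsfun (h : {nnsfun pt >-> R}) :
  measurable_fun setT (fun w => \sum_(y <- Phi w) (h y)%:E).
Proof.
rewrite (funext (fun w => sum_nnsfunE h (Phi w))).
apply: emeasurable_sum => r; apply: measurable_funeM.
exact: measurable_count_in (measurable_funPTI h (measurable_set1 r)).
Qed.

Lemma campbell_nnsfun (h : {nnsfun pt >-> R}) :
  \int[P]_w \sum_(y <- Phi w) (h y)%:E =
  \int[leb]_(x in X) ((h x)%:E * (lam x)%:E).
Proof.
have [mlam lam0 _] := hlam.
have mh r : measurable (h @^-1` [set r]) :=
  measurable_funPTI h (measurable_set1 r).
have mind r : measurable_fun X
    (fun x => (\1_(h @^-1` [set r]) x)%:E * (lam x)%:E).
  by apply: emeasurable_funM; apply/measurable_EFinP.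
have ind0 r x : X x -> 0 <= (\1_(h @^-1` [set r]) x)%:E * (lam x)%:E.
  by move=> Xx; apply: mule_ge0; rewrite lee_fin ?lam0.
rewrite (funext (fun w => sum_nnsfunE h (Phi w))).
rewrite ge0_integral_sum//; last first.
  by move=> r; apply: measurable_funeM; exact: measurable_count_in.
have -> : \int[leb]_(x in X) ((h x)%:E * (lam x)%:E) = \int[leb]_(x in X)
    \sum_(r <- range_seq h) (`|r|%:E * ((\1_(h @^-1` [set r]) x)%:E * (lam x)%:E)).
  apply: eq_integral => x _; rewrite nnsfunE_indic ge0_sume_distrl.
    by apply: eq_bigr => r _; rewrite muleA.
  by move=> r _; apply: mule_ge0; rewrite lee_fin.
rewrite ge0_integral_sum//; first last.
- by move=> r x Xx; apply: mule_ge0 => //; exact: ind0.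
- by move=> r; apply: measurable_funeM.
apply: eq_bigr => r _; rewrite !ge0_integralZl//.
- by rewrite expected_count_in.
- exact: ind0.
- exact: measurable_count_in.
Qed.

Section nonnegative.
Variables (f : pt -> \bar R) (mf : measurable_fun X f).
Hypothesis f0 : forall x, X x -> 0 <= f x.
Local Notation approx := (nnsfun_approx mX mf).

Lemma sum_points_approx_cvg w :
  (fun n => \sum_(y <- Phi w) (approx n y)%:E) @ \oo --> \sum_(y <- Phi w) f y.
Proof.
rewrite big_seq; under eq_fun do rewrite big_seq.
apply: cvg_nnesum => [y _|y yP]; first by apply: nearW => n; rewrite lee_fin.
exact: cvg_nnsfun_approx f0 _ (hPhi.1 w y yP).
Qed.

Lemma measurable_sum_points :
  measurable_fun setT (fun w => \sum_(y <- Phi w) f y).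
Proof.
apply: emeasurable_fun_cvg (fun n => measurable_sum_nnsfun (approx n)) _.
by move=> w _; exact: sum_points_approx_cvg.
Qed.

Lemma campbell : \int[P]_w \sum_(y <- Phi w) f y =
  \int[leb]_(x in X) (f x * (lam x)%:E).
Proof.
have [mlam lam0 _] := hlam.
have nd_approx x n m : (n <= m)%N -> (approx n x <= approx m x)%R.
  by move=> nm; have /lefP := nd_nnsfun_approx mX mf nm; apply.
transitivity (limn (fun n => \int[P]_w \sum_(y <- Phi w) (approx n y)%:E)).
  rewrite -monotone_convergence//.
  - apply: eq_integral => w _; apply/esym/cvg_lim => //.
    exact: sum_points_approx_cvg.
  - by move=> n; exact: measurable_sum_nnsfun.
  - by move=> n w _; rewrite sume_ge0// => y _; rewrite lee_fin.
  - by move=> w _ n m nm; apply: lee_sum => y _; rewrite lee_fin nd_approx.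
under eq_fun do rewrite campbell_nnsfun.
rewrite -monotone_convergence//.
- apply: eq_integral => x /set_mem Xx; apply/cvg_lim => //.
  by apply: cvgeZr => //; exact: cvg_nnsfun_approx.
- move=> n; apply: emeasurable_funM; apply/measurable_EFinP => //.
  exact: measurable_funTS.
- by move=> n x Xx; apply: mule_ge0; rewrite lee_fin ?lam0.
- by move=> x Xx n m nm; apply: lee_wpmul2r; rewrite lee_fin ?lam0 ?nd_approx.
Qed.

End nonnegative.

Lemma ae_points_density_gt0 :
  {ae P, forall w, {in Phi w, forall y, (0 < lam y)%R}}.
Proof.
have [mlam lam0 _] := hlam.
pose Z := X `&` lam @^-1` [set 0%R].
have mZ : measurable Z := mlam mX _ (measurable_set1 0%R).
have mZE : measurable_fun X (fun y => (\1_Z y : R)%:E).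
  by apply/measurable_EFinP.
have Z0 : \int[P]_w \sum_(y <- Phi w) (\1_Z y : R)%:E = 0.
  rewrite campbell//.
  apply: integral0_eq => x Xx; rewrite indicE.
  by case: (boolP (x \in Z)) => [/set_mem [_ /= ->]|_]; rewrite ?mule0 ?mul0e.
have Z_ge0 y : X y -> 0 <= (\1_Z y : R)%:E by rewrite lee_fin.
have sum_ge0 w : setT w -> 0 <= \sum_(y <- Phi w) (\1_Z y : R)%:E.
  by move=> _; rewrite sume_ge0// => y _; rewrite lee_fin.
have := ge0_integral_eq0_ae P measurableT _
  (measurable_sum_points _ mZE Z_ge0) sum_ge0 Z0.
apply: filterS => w /(_ I) /eqP; rewrite seq_psume_eq0; last first.
  by move=> y _; rewrite lee_fin.
move=> /allP Zw y yPhi; have Xy := hPhi.1 w y yPhi.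
rewrite lt_neqAle lam0// andbT eq_sym; apply/eqP => ly0.
by have := Zw y yPhi; rewrite indicE mem_set//= eqe oner_eq0.
Qed.

Lemma log_score_decomposition (q : pt -> R) (s : seq pt) :
  {in s, forall y, (0 < lam y)%R} ->
  log_score leb X q s + \sum_(y <- s) ((q y / lam y)%R)%:E
    + \int[leb]_(x in X) (lam x)%:E =
  log_score leb X lam s + (\sum_(y <- s) (kl_gap (q y / lam y)%R + 1)
    + \int[leb]_(x in X) (q x)%:E).
Proof.
move=> s_gt0; rewrite /log_score.
have rearrange (a b c e f g : \bar R) :
    a + b = c + e -> a + f + b + g = c + g + (e + f).
  move=> abce; rewrite (addeAC a f b) abce -!addeA.
  by rewrite (addeCA g) (addeC g).
apply: rearrange; rewrite -!big_split; apply: eq_big_seq => y ys /=.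
by rewrite addeA neglogD_div ?s_gt0.
Qed.

Section score_difference.
Context {q : pt -> R}.
Hypothesis hq : is_density leb X q.
(* Where [lam x = 0], [ratio x = 0] (division by zero), so [ratio x * lam x]
   is [q x] only on {lam > 0}: hence the inequality in [integral_ratio_le]. *)
Local Notation ratio x := (q x / lam x)%R.

Lemma measurable_ratio : measurable_fun X (fun x => ratio x).
Proof.
have [mq _ _] := hq; have [mlam _ _] := hlam.
by apply: measurable_funM => //; exact: measurableT_comp measurable_inv mlam.
Qed.

Lemma ratio_ge0 x : X x -> (0 <= ratio x)%R.
Proof.
have [_ q0 _] := hq; have [_ lam0 _] := hlam.
by move=> Xx; rewrite divr_ge0 ?q0 ?lam0.
Qed.

Lemma measurable_kl_gap_ratio : measurable_fun X (fun x => kl_gap (ratio x)).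
Proof. exact: measurableT_comp measurable_kl_gap measurable_ratio. Qed.

Lemma measurable_kl_gap_ratio1 :
  measurable_fun X (fun x => kl_gap (ratio x) + 1).
Proof. exact: emeasurable_funD measurable_kl_gap_ratio (measurable_cst _). Qed.

Lemma expected_kl_sum :
  \int[P]_w (\sum_(y <- Phi w) (kl_gap (ratio y) + 1)
              + \int[leb]_(x in X) (q x)%:E) =
  \int[leb]_(x in X) (kl_gap (ratio x) * (lam x)%:E)
    + \int[leb]_(x in X) (lam x)%:E + \int[leb]_(x in X) (q x)%:E.
Proof.
have [mlam lam0 _] := hlam; have [_ q0 _] := hq.
have mkl1 := measurable_kl_gap_ratio1.
have kl1_ge0 x : X x -> 0 <= kl_gap (ratio x) + 1.
  by rewrite adde_ge0 ?kl_gap_ge0.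
have cq_ge0 : 0 <= \int[leb]_(x in X) (q x)%:E.
  by apply: integral_ge0 => x Xx; rewrite lee_fin q0.
rewrite ge0_integralD//; first last.
- exact: measurable_sum_points mkl1 kl1_ge0.
- by move=> w _; rewrite big_seq; apply: sume_ge0 => y /(hPhi.1 w)/kl1_ge0.
rewrite campbell// integral_cst_probability; congr (_ + _).
rewrite -ge0_integralD//.
- by apply: eq_integral => x _; rewrite muleDl ?mul1e// fin_num_adde_defl.
- by move=> x Xx; rewrite mule_ge0 ?kl_gap_ge0 ?lee_fin ?lam0.
- apply: emeasurable_funM measurable_kl_gap_ratio _.
  by apply/measurable_EFinP.
- by apply/measurable_EFinP.
Qed.

Lemma expected_ratio_sum :
  \int[P]_w \sum_(y <- Phi w) (ratio y)%:E =
  \int[leb]_(x in X) (ratio x * lam x)%:E.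
Proof.
rewrite campbell//.
- by apply/measurable_EFinP; exact: measurable_ratio.
- by move=> x Xx; rewrite lee_fin ratio_ge0.
Qed.

Lemma integral_ratio_le :
  \int[leb]_(x in X) (ratio x * lam x)%:E <= \int[leb]_(x in X) (q x)%:E.
Proof.
have [mq q0 _] := hq; have [mlam lam0 _] := hlam.
apply: ge0_le_integral => //.
- by move=> x Xx; rewrite lee_fin mulr_ge0 ?ratio_ge0 ?lam0.
- apply/measurable_EFinP; apply: measurable_funM => //.
  exact: measurable_ratio.
- by apply/measurable_EFinP.
- by move=> x Xx; rewrite lee_fin ler_divfK ?q0.
Qed.

Lemma expected_log_score_gap :
  P.-integrable setT (fun w => log_score leb X lam (Phi w)) ->
  P.-integrable setT (fun w => log_score leb X q (Phi w)) ->
  \int[leb]_(x in X) (kl_gap (ratio x) * (lam x)%:E)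
    + \int[leb]_(x in X) (lam x)%:E + \int[leb]_(x in X) (q x)%:E =
  \int[P]_w log_score leb X q (Phi w) + \int[leb]_(x in X) (ratio x * lam x)%:E
    + \int[leb]_(x in X) (lam x)%:E - \int[P]_w log_score leb X lam (Phi w).
Proof.
move=> ilam iq; have [_ _ int_lam] := hlam; have [_ _ int_q] := hq.
have mratio : measurable_fun X (fun x => (ratio x)%:E).
  by apply/measurable_EFinP; exact: measurable_ratio.
have ratio_ge0E x : X x -> 0 <= (ratio x)%:E.
  by move=> Xx; rewrite lee_fin ratio_ge0.
have sum_ratio_ge0 w : 0 <= \sum_(y <- Phi w) (ratio y)%:E.
  by rewrite big_seq; apply: sume_ge0 => y /(hPhi.1 w)/ratio_ge0E.
have int_ratio : P.-integrable setT (fun w => \sum_(y <- Phi w) (ratio y)%:E).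
  apply/integrableP; split.
    exact: measurable_sum_points mratio ratio_ge0E.
  under eq_integral do rewrite gee0_abs//.
  rewrite expected_ratio_sum; apply: (le_lt_trans integral_ratio_le).
  by rewrite -(fineK (integrable_fin_num mX int_q)) ltry.
have int_cl : P.-integrable setT (cst (\int[leb]_(x in X) (lam x)%:E)).
  rewrite -(fineK (integrable_fin_num mX int_lam)).
  exact: finite_measure_integrable_cst.
have int_H :=
  integrableD measurableT (integrableD measurableT iq int_ratio) int_cl.
rewrite -expected_kl_sum (integral_ae_diff P measurableT ilam int_H).
- rewrite (integralD measurableT (integrableD measurableT iq int_ratio) int_cl).
  rewrite (integralD measurableT iq int_ratio) expected_ratio_sum.
  by rewrite integral_cst_probability.
- apply: emeasurable_funD => //.
  apply: measurable_sum_points measurable_kl_gap_ratio1 _.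
  by move=> x _; rewrite adde_ge0 ?kl_gap_ge0.
- have := ae_points_density_gt0; apply: filterS => w w_gt0 _.
  exact: log_score_decomposition.
Qed.

Lemma density_ae_eq_of_gap_eq0 :
  \int[leb]_(x in X) (kl_gap (ratio x) * (lam x)%:E) = 0 ->
  \int[leb]_(x in X) (ratio x * lam x)%:E = \int[leb]_(x in X) (q x)%:E ->
  ae_eq leb X (EFin \o q) (EFin \o lam).
Proof.
move=> kl0 ratio_q; have [mq q0 int_q] := hq; have [mlam lam0 _] := hlam.
have mrl : measurable_fun X (fun x => ratio x * lam x)%R.
  exact: measurable_funM measurable_ratio mlam.
have int_rl : leb.-integrable X (fun x => (ratio x * lam x)%:E).
  apply: (le_integrable mX _ _ int_q) => [|x Xx].
    by apply/measurable_EFinP.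
  rewrite /= lee_fin (ger0_norm (q0 x Xx)) ger0_norm ?ler_divfK ?q0//.
  by rewrite mulr_ge0 ?ratio_ge0 ?lam0.
have kl_ae : ae_eq leb X (fun x => kl_gap (ratio x) * (lam x)%:E) (cst 0).
  apply: ge0_integral_eq0_ae => //.
  - apply: emeasurable_funM measurable_kl_gap_ratio _.
    by apply/measurable_EFinP.
  - by move=> x Xx; apply: mule_ge0; rewrite ?kl_gap_ge0 ?lee_fin ?lam0.
have q_ae : ae_eq leb X (fun x => (q x - ratio x * lam x)%:E) (cst 0).
  apply: ge0_integral_eq0_ae => //.
  - by apply/measurable_EFinP; exact: measurable_funB.
  - by move=> x Xx; rewrite lee_fin subr_ge0 ler_divfK ?q0.
  - rewrite (eq_integral (fun x => (q x)%:E - (ratio x * lam x)%:E))//.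
    by rewrite integralB// -ratio_q subee// (integrable_fin_num mX int_rl).
apply: filterS2 kl_ae q_ae => x klx qx Xx /=; congr (_%:E).
apply: eq_of_kl_gap_mul_eq0 (klx Xx) _.
by move: (qx Xx) => -[] /eqP; rewrite subr_eq0 => /eqP.
Qed.

End score_difference.

End point_process.

Theorem proposition4p3 (R : realType) (d : nat)
    (leb : {measure set (d.-tuple R) -> \bar R}) (hleb : is_lebesgue leb)
    (X : set (d.-tuple R)) (mX : measurable X) (bX : bounded_region X)
    (dO : measure_display) (Omega : measurableType dO)
    (P : probability Omega R) (Phi : Omega -> seq (d.-tuple R))
    (hPhi : is_point_process X Phi)
    (lam : d.-tuple R -> R) (hlam : is_density leb X lam)
    (hint : forall B, measurable B ->
                intensity P Phi B = density_measure leb X lam B)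
    (q : d.-tuple R -> R) (hq : is_density leb X q)
    (ilam : P.-integrable setT (fun w => log_score leb X lam (Phi w)))
    (iq : P.-integrable setT (fun w => log_score leb X q (Phi w))) :
  ((\int[P]_w log_score leb X lam (Phi w)
      <= \int[P]_w log_score leb X q (Phi w))%E /\
   ((\int[P]_w log_score leb X q (Phi w)
      = \int[P]_w log_score leb X lam (Phi w))%E ->
    forall B, measurable B ->
      density_measure leb X q B = density_measure leb X lam B)).
Proof.
have [mlam lam0 int_lam] := hlam; have [mq q0 int_q] := hq.
have kl_ge0 : (0 <= \int[leb]_(x in X) (kl_gap (q x / lam x) * (lam x)%:E))%E.
  by apply: integral_ge0 => x Xx; rewrite mule_ge0 ?kl_gap_ge0 ?lee_fin ?lam0.
have rl_ge0 : (0 <= \int[leb]_(x in X) (q x / lam x * lam x)%:E)%E.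
  by apply: integral_ge0 => x Xx; rewrite lee_fin mulr_ge0 ?divr_ge0 ?q0 ?lam0.
have [scores_le scores_eq] := gap_identity_le
  (integrable_fin_num mX int_lam) (integrable_fin_num mX int_q)
  (integrable_fin_num measurableT ilam) (integrable_fin_num measurableT iq)
  kl_ge0 rl_ge0 (integral_ratio_le mX hlam hq)
  (expected_log_score_gap mX hPhi hlam hint hq ilam iq).
split=> // /scores_eq [kl0 rl_q].
exact: density_measure_ae_eq mX mq mlam
  (density_ae_eq_of_gap_eq0 mX hlam hq kl0 rl_q).
Qed.
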